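(* Consider the system $x_{k+1}=Ax_k+Bu_k$ with $(A,B)$ stabilizable, constraint sets $\mathcal{X}=\{x\mid C_xx\le c_x\}$, $\mathcal{U}=\{u\mid C_uu\le c_u\}$ (with $0\in\operatorname{int}\mathcal{X}$, $0\in\operatorname{int}\mathcal{U}$), cost $J=\sum_{k=0}^\infty x_k^TQx_k+u_k^TRu_k$ with $Q$ positive semidefinite and $R$ positive definite, and LQR gain $K_{\text{lqr}}$ (the optimal unconstrained feedback $u_k=-K_{\text{lqr}}x_k$ for $J$). Let the system be controlled by a ReLU network $u_k=\mathcal{N}(x_k;\theta)$ with $L$ hidden layers, closed loop $f_{\text{cl}}(x)=Ax+B\mathcal{N}(x;\theta)$, let $\Gamma_{\text{eq}}=G(0)$ and $\mathcal{R}_{\text{eq}}=\{x\mid G(x)=\Gamma_{\text{eq}}\}$, and suppose $W_{L+1}(W_{\Gamma_{\text{eq}},L}x+b_{\Gamma_{\text{eq}},L})+b_{L+1}=-K_{\text{lqr}}x$ for all $x\in\mathbb{R}^{n_x}$. Let $\mathcal{R}_{\text{lqr}}$ be the set of initial states from which the LQR feedback $u_k=-K_{\text{lqr}}x_k$ yields $x_k\in\mathcal{X}$, $u_k\in\mathcal{U}$ for all $k\ge0$, and let $\mathcal{R}_{\text{as}}$ be an admissible control-invariant set for the closed loop with $\mathcal{R}_{\text{as}}\subseteq\mathcal{R}_{\text{eq}}\cap\mathcal{R}_{\text{lqr}}$. Let $\mathcal{X}_{\text{in}}=\{x\mid C_{\text{in}}x\le c_{\text{in}}\}$ be a polytope,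 $k\ge1$, $C_{\text{out}}\in\mathbb{R}^{n_{\text{out}}\times n_x}$, $c_{\text{out}}^{*(i)}=\max_{x_0\in\mathcal{X}_{\text{in}}}C_{\text{out}}^{(i)}f_{\text{cl}}^k(x_0)$ and $\mathcal{X}^*_{k,\text{out}}=\{x\mid C_{\text{out}}x\le c^*_{\text{out}}\}$. If $\mathcal{X}^*_{k,\text{out}}\subseteq\mathcal{R}_{\text{as}}$, then the neural network controller drives the system to the origin optimally with respect to $J$ (i.e. it applies the LQR input $-K_{\text{lqr}}x$) for all $x\in\mathcal{R}_{\text{as}}$, and drives the system asymptotically to the origin for all $x\in\mathcal{X}_{\text{in}}$.
   Context: A ReLU network is $\mathcal{N}(x;\theta)=W_{L+1}\xi_L+b_{L+1}$ with $\xi_0=x$, $\xi_l=\max(0,W_l\xi_{l-1}+b_l)$ elementwise for $l=1,\dots,L$, where $W_l\in\mathbb{R}^{n_l\times n_{l-1}}$ ($n_0=n_x$), $b_l\in\mathbb{R}^{n_l}$, $W_{L+1}\in\mathbb{R}^{n_u\times n_L}$, $b_{L+1}\in\mathbb{R}^{n_u}$. The activation pattern is $G(x)=(\gamma_1(x),\dots,\gamma_L(x))$, $\gamma_l(x)^{(i)}=1$ iff $W_l^{(i)}\xi_{l-1}+b_l^{(i)}\ge0$, else $0$. For a fixed pattern $\Gamma=(\gamma_1,\dots,\gamma_L)$ set $\eta_0=x$, $\eta_l=\gamma_l\odot(W_l\eta_{l-1}+b_l)$; then $\eta_L=W_{\Gamma,L}x+b_{\Gamma,L}$ defines $W_{\Gamma,L},b_{\Gamma,L}$,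 and $\mathcal{N}(x;\theta)=W_{L+1}(W_{\Gamma_{\text{eq}},L}x+b_{\Gamma_{\text{eq}},L})+b_{L+1}$ on $\mathcal{R}_{\text{eq}}$. $f_{\text{cl}}^k$ denotes the $k$-fold composition. A set $\mathcal{C}$ is an admissible control-invariant set for the closed loop if $\mathcal{N}(x;\theta)\in\mathcal{U}$ for all $x\in\mathcal{C}$ and $f_{\text{cl}}(\mathcal{C})\subseteq\mathcal{C}$. *)

From HB Require Import structures.
From mathcomp Require Import all_boot all_order all_algebra.
From mathcomp Require Import all_classical all_reals all_analysis.
Unset Printing Implicit Defensive.
Import Order.TTheory GRing.Theory Num.Theory.
Import numFieldNormedType.Exports.
Local Open Scope classical_set_scope.
Local Open Scope ring_scope.

Section Defs.
Context {R : realType}.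

Definition in_poly {m n : nat} (C : 'M[R]_(m, n)) (c : 'cV[R]_m) (x : 'cV[R]_n) : Prop :=
  forall i : 'I_m, (C *m x) i 0 <= c i 0.

Definition zero_in_interior {m n : nat} (C : 'M[R]_(m, n)) (c : 'cV[R]_m) : Prop :=
  exists2 e : R, 0 < e &
    forall x : 'cV[R]_n, (forall j, `|x j 0| < e) -> in_poly C c x.

Definition cvg_to_origin {n : nat} (u : nat -> 'cV[R]_n) : Prop :=
  forall j : 'I_n, (fun k => u k j 0) @ \oo --> (0 : R).

Definition schur_stable {n : nat} (M : 'M[R]_n) : Prop :=
  forall x : 'cV[R]_n, cvg_to_origin (fun k => iter k (mulmx M) x).

Definition stabilizable {nx nu : nat} (A : 'M[R]_nx) (B : 'M[R]_(nx, nu)) : Prop :=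
  exists F : 'M[R]_(nu, nx), schur_stable (A + B *m F).

Definition psd {n : nat} (Q : 'M[R]_n) : Prop :=
  Q^T = Q /\ forall x : 'cV[R]_n, 0 <= (x^T *m Q *m x) 0 0.

Definition pd {n : nat} (Q : 'M[R]_n) : Prop :=
  Q^T = Q /\ forall x : 'cV[R]_n, x != 0 -> 0 < (x^T *m Q *m x) 0 0.

(* LQR gain: K = (R + B^T P B)^{-1} B^T P A where P is the (symmetric psd)
   stabilizing solution of the discrete algebraic Riccati equation. *)
Definition is_lqr_gain {nx nu : nat} (A : 'M[R]_nx) (B : 'M[R]_(nx, nu))
    (Q : 'M[R]_nx) (Rc : 'M[R]_nu) (K : 'M[R]_(nu, nx)) : Prop :=
  exists P : 'M[R]_nx,
    [/\ psd P,
        Rc + B^T *m P *m B \in unitmx,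
        K = invmx (Rc + B^T *m P *m B) *m (B^T *m P *m A),
        P = A^T *m P *m A - A^T *m P *m B *m K + Q
      & schur_stable (A - B *m K)].

(* ReLU networks: widths n : nat -> nat (n 0 = input dimension),
   hidden layer l+1 has weights W l : 'M_(n l.+1, n l), bias b l;
   output layer Wo, bo. *)
Section Net.
Variables (n : nat -> nat) (nu : nat) (L : nat).
Variables (W : forall l, 'M[R]_(n l.+1, n l)) (b : forall l, 'cV[R]_(n l.+1)).
Variables (Wo : 'M[R]_(nu, n L)) (bo : 'cV[R]_nu).

Definition relu {m : nat} (v : 'cV[R]_m) : 'cV[R]_m := map_mx (fun a => Num.max 0 a) v.

Fixpoint nn_xi (x : 'cV[R]_(n 0%N)) (l : nat) : 'cV[R]_(n l) :=
  match l return 'cV[R]_(n l) with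
  | 0 => x
  | l'.+1 => relu (W l' *m nn_xi x l' + b l')
  end.

Definition nn_out (x : 'cV[R]_(n 0%N)) : 'cV[R]_nu := Wo *m nn_xi x L + bo.

(* activation pattern: nn_act x l i = gamma_{l+1}(x)^{(i)} *)
Definition nn_act (x : 'cV[R]_(n 0%N)) (l : nat) (i : 'I_(n l.+1)) : bool :=
  0 <= (W l *m nn_xi x l + b l) i 0.

Definition in_Req (x : 'cV[R]_(n 0%N)) : Prop :=
  forall l, (l < L)%N -> forall i, nn_act x l i = nn_act 0 l i.

Fixpoint nn_eta (g : forall l, 'I_(n l.+1) -> bool) (x : 'cV[R]_(n 0%N)) (l : nat)
  : 'cV[R]_(n l) :=
  match l return 'cV[R]_(n l) with
  | 0 => x
  | l'.+1 => \col_i (if g l' i then (W l' *m nn_eta g x l' + b l') i 0 else 0)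
  end.

End Net.
End Defs.

Section Closed.
Context {R : realType}.
Definition fcl {nx nu : nat} (A : 'M[R]_nx) (B : 'M[R]_(nx, nu))
  (pi : 'cV[R]_nx -> 'cV[R]_nu) (x : 'cV[R]_nx) : 'cV[R]_nx :=
  A *m x + B *m pi x.

Definition in_Rlqr {nx nu mx mu : nat} (A : 'M[R]_nx) (B : 'M[R]_(nx, nu))
  (K : 'M[R]_(nu, nx)) (Cx : 'M[R]_(mx, nx)) (cx : 'cV[R]_mx)
  (Cu : 'M[R]_(mu, nu)) (cu : 'cV[R]_mu) (x0 : 'cV[R]_nx) : Prop :=
  forall k : nat,
    in_poly Cx cx (iter k (fcl A B (fun x => - (K *m x))) x0) /\
    in_poly Cu cu (- (K *m iter k (fcl A B (fun x => - (K *m x))) x0)).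

Definition admissible_invariant {nx nu mu : nat} (A : 'M[R]_nx) (B : 'M[R]_(nx, nu))
  (pi : 'cV[R]_nx -> 'cV[R]_nu) (Cu : 'M[R]_(mu, nu)) (cu : 'cV[R]_mu)
  (C : 'cV[R]_nx -> Prop) : Prop :=
  forall x, C x -> in_poly Cu cu (pi x) /\ C (fcl A B pi x).
End Closed.

(* On R_eq every neuron keeps the activation it has at the origin, so the network
   coincides there with its affine piece at the origin, which is assumed to be the
   LQR law -K x. Since R_as is invariant and contained in R_eq, closed-loop
   trajectories from R_as are trajectories of x+ = (A - B K) x, which is Schur
   stable. A state of X_in reaches X*_{k,out}, a subset of R_as, after k steps,
   and the convergence of the tail gives convergence of the whole trajectory. *)
From HB Require Import structures.
From mathcomp Require Import all_boot all_order all_algebra.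
From mathcomp Require Import all_classical all_reals all_analysis.
Import Order.TTheory GRing.Theory Num.Theory.
Local Open Scope ring_scope.

Section ReluPattern.
Variables (R : realType) (n : nat -> nat) (nu L : nat).
Variables (W : forall l, 'M[R]_(n l.+1, n l)) (b : forall l, 'cV[R]_(n l.+1)).
Variables (Wo : 'M[R]_(nu, n L)) (bo : 'cV[R]_nu).

Lemma nn_xi_eta {g : forall l, 'I_(n l.+1) -> bool} {x : 'cV[R]_(n 0%N)} :
  (forall l, (l < L)%N -> forall i, nn_act n W b x l i = g l i) ->
  forall l, (l <= L)%N -> nn_xi n W b x l = nn_eta n W b g x l.
Proof.
move=> act_x; elim=> [//|l IHl] ltlL.
apply/matrixP => i j; rewrite (ord1 j) /= /relu -IHl 1?ltnW // !mxE.
by rewrite -act_x // /nn_act !mxE maxEle; case: ifP.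
Qed.

Lemma nn_out_Req (x : 'cV[R]_(n 0%N)) : in_Req n L W b x ->
  nn_out n nu L W b Wo bo x = Wo *m nn_eta n W b (nn_act n W b 0) x L + bo.
Proof. by move=> x_Req; rewrite /nn_out (nn_xi_eta x_Req _ (leqnn L)). Qed.

End ReluPattern.

Section Iterates.
Context {T : Type} {f : T -> T} {S : T -> Prop}.
Hypothesis f_inv : forall x, S x -> S (f x).

Lemma iter_invariant x : S x -> forall j, S (iter j f x).
Proof. by move=> Sx; elim=> //= j; apply: f_inv. Qed.

Lemma eq_iter_on {g : T -> T} {x : T} : (forall y, S y -> f y = g y) ->
  S x -> forall j, iter j f x = iter j g x.
Proof.
move=> eq_fg Sx; elim=> //= j IHj.
by rewrite -IHj eq_fg //; apply: iter_invariant.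
Qed.

End Iterates.

Section ClosedLoop.
Context {R : realType} {nx nu : nat}.

Lemma cvg_to_origin_shiftn (u : nat -> 'cV[R]_nx) k :
  cvg_to_origin (fun j => u (j + k)%N) -> cvg_to_origin u.
Proof.
by move=> cvg_u i; rewrite -(@cvg_shiftn k R^o (fun j => u j i 0)); apply: cvg_u.
Qed.

Lemma fcl_linear (A : 'M[R]_nx) (B : 'M[R]_(nx, nu)) K ctrl x :
  ctrl x = - (K *m x) -> fcl A B ctrl x = (A - B *m K) *m x.
Proof. by move=> ctrl_x; rewrite /fcl ctrl_x mulmxBl mulmxN mulmxA. Qed.

Lemma invariant_closed_loop_linear {mu} {A : 'M[R]_nx} {B : 'M[R]_(nx, nu)}
    {ctrl : 'cV[R]_nx -> 'cV[R]_nu} {Cu : 'M[R]_(mu, nu)} {cu} {S} {K} :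
  admissible_invariant A B ctrl Cu cu S -> (forall x, S x -> ctrl x = - (K *m x)) ->
  forall x, S x -> forall j,
    iter j (fcl A B ctrl) x = iter j (mulmx (A - B *m K)) x.
Proof.
move=> S_inv ctrl_lin x Sx j.
have S_fcl y : S y -> S (fcl A B ctrl y) by case/S_inv.
by apply: (eq_iter_on S_fcl _ Sx) => y /ctrl_lin /fcl_linear.
Qed.

End ClosedLoop.

Theorem corollary1 (R : realType)
  (* ReLU network: widths n 0 = n_x, n 1, ..., n L; output dimension nu *)
  (n : nat -> nat) (nu L : nat)
  (W : forall l, 'M[R]_(n l.+1, n l)) (b : forall l, 'cV[R]_(n l.+1))
  (Wo : 'M[R]_(nu, n L)) (bo : 'cV[R]_nu)
  (* system and constraints *)
  (A : 'M[R]_(n 0%N)) (B : 'M[R]_(n 0%N, nu))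
  (mx mu : nat) (Cx : 'M[R]_(mx, n 0%N)) (cx : 'cV[R]_mx)
  (Cu : 'M[R]_(mu, nu)) (cu : 'cV[R]_mu)
  (* cost and LQR gain *)
  (Q : 'M[R]_(n 0%N)) (Rc : 'M[R]_nu) (K : 'M[R]_(nu, n 0%N))
  (* admissible invariant set, input polytope, output template *)
  (Ras : 'cV[R]_(n 0%N) -> Prop)
  (nin : nat) (Cin : 'M[R]_(nin, n 0%N)) (cin : 'cV[R]_nin)
  (k nout : nat) (Cout : 'M[R]_(nout, n 0%N)) (cout : 'cV[R]_nout) :
  stabilizable A B ->
  zero_in_interior Cx cx ->
  zero_in_interior Cu cu ->
  psd Q ->
  pd Rc ->
  is_lqr_gain A B Q Rc K ->
  (* the affine piece on R_eq equals the LQR law *)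
  (forall x : 'cV[R]_(n 0%N),
     Wo *m nn_eta n W b (fun l i => nn_act n W b 0 l i) x L + bo = - (K *m x)) ->
  admissible_invariant A B (nn_out n nu L W b Wo bo) Cu cu Ras ->
  (forall x, Ras x -> in_Req n L W b x /\ in_Rlqr A B K Cx cx Cu cu x) ->
  (1 <= k)%N ->
  (* cout^(i) = max_{x0 in X_in} Cout^(i) f_cl^k(x0) *)
  (forall i : 'I_nout,
     (exists2 x0, in_poly Cin cin x0 &
        (Cout *m iter k (fcl A B (nn_out n nu L W b Wo bo)) x0) i 0 = cout i 0) /\
     (forall x0, in_poly Cin cin x0 ->
        (Cout *m iter k (fcl A B (nn_out n nu L W b Wo bo)) x0) i 0 <= cout i 0)) ->
  (* X*_{k,out} subset of R_as *)
  (forall x, in_poly Cout cout x -> Ras x) ->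
  (forall x0, Ras x0 ->
     (forall j : nat,
        nn_out n nu L W b Wo bo (iter j (fcl A B (nn_out n nu L W b Wo bo)) x0)
        = - (K *m iter j (fcl A B (nn_out n nu L W b Wo bo)) x0)) /\
     cvg_to_origin (fun j => iter j (fcl A B (nn_out n nu L W b Wo bo)) x0)) /\
  (forall x0, in_poly Cin cin x0 ->
     cvg_to_origin (fun j => iter j (fcl A B (nn_out n nu L W b Wo bo)) x0)).
Proof.
move=> _ _ _ _ _ [P [_ _ _ _ stable_ABK]] eta_lqr Ras_inv Ras_sub _ cout_max Xout_sub.
set ctrl := nn_out n nu L W b Wo bo; set f := fcl A B ctrl.
have ctrl_lqr x : Ras x -> ctrl x = - (K *m x).
  by case/Ras_sub => x_Req _; rewrite /ctrl nn_out_Req.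
have Ras_iter x0 : Ras x0 -> forall j, Ras (iter j f x0).
  by apply: iter_invariant => y /Ras_inv[].
have Ras_cvg x0 : Ras x0 -> cvg_to_origin (fun j => iter j f x0).
  move=> Ras_x0; rewrite (funext (invariant_closed_loop_linear Ras_inv ctrl_lqr _ Ras_x0)).
  exact: stable_ABK.
split=> [x0 Ras_x0|x0 Xin_x0].
  by split=> [j|]; [apply/ctrl_lqr/Ras_iter | apply: Ras_cvg].
have Ras_k : Ras (iter k f x0) by apply: Xout_sub => i; apply: (cout_max i).2.
apply: (cvg_to_origin_shiftn _ k).
rewrite (funext (fun j => iterD j k f x0)).
exact: Ras_cvg.
Qed.
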